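(* Let $n\geq2$, $0\leq\lambda\leq n-1$, $\mu>0$, $\alpha=1-\frac{\lambda}{n-1}$, and for $0<r<1$ set $$\varphi(r)=\begin{cases}\exp\bigl(-(n+1)\mu\log^\alpha(\tfrac1r)\bigr), &\alpha>0,\\ 2^{-n}\mu^n\log^{-n(1+\mu)}(\tfrac1r), &\alpha=0,\end{cases}\qquad \psi(r)=\begin{cases}\exp\bigl(-\mu\log^\alpha(\tfrac1r)\bigr), &\alpha>0,\\ \log^{-\mu}(\tfrac1r), &\alpha=0.\end{cases}$$ Then there exists $R_0=R_0(\alpha,\mu)>0$ such that $\psi(2r)-\psi(r)\geq(\varphi(r))^{1/n}$ for all $0<r<R_0$. *)

From Stdlib Require Import Reals Lra Lia.
Open Scope R_scope.

Definition alpha5 (n : nat) (lam : R) : R := 1 - lam / (INR n - 1).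

Definition logpow (a r : R) : R := Rpower (ln (/ r)) a.

(* phi(r) from the paper; the branch alpha = 0 is the "else" case
   (alpha in [0,1] under the hypotheses). *)
Definition phi5 (n : nat) (a mu r : R) : R :=
  if Rlt_dec 0 a then exp (- (INR n + 1) * mu * logpow a r)
  else (/ 2) ^ n * mu ^ n * Rpower (ln (/ r)) (- (INR n) * (1 + mu)).

Definition psi5 (a mu r : R) : R :=
  if Rlt_dec 0 a then exp (- mu * logpow a r)
  else Rpower (ln (/ r)) (- mu).

(* Put L := ln (1/r), so that ln (1/(2r)) = L - ln 2 and the claim becomes a
   lower bound for the decrement of the decreasing functions exp (- mu L^a)
   and L^(-mu) when L drops by ln 2.  Convexity of exp and the estimate
   ln (L - c) <= ln L - c/L give an increment of at least
   (mu a ln 2 / 2L) exp (- mu L^a), resp. (mu / 2L) L^(-mu).  For a = 0 the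
   latter is exactly phi^(1/n); for a > 0 the former
   beats phi^(1/n) = exp (- mu L^a) exp (- mu L^a / n) as soon as
   exp (- mu L^a / n) <= mu a ln 2 / (2 L), which holds for large L because
   mu L^a / n = mu exp (a ln L) / n grows quadratically in ln L. *)

From Stdlib Require Import Reals Lra Lia.
Open Scope R_scope.

Lemma exp_le_exp (x y : R) : x <= y -> exp x <= exp y.
Proof. intros [Hxy | ->]; [left; apply exp_increasing |]; lra. Qed.

Lemma ln_le_sub_1 (x : R) : 0 < x -> ln x <= x - 1.
Proof.
  intros Hx. pose proof (exp_ineq1_le (ln x)) as Hexp. rewrite exp_ln in Hexp; lra.
Qed.

Lemma ln_2_lt_1 : ln 2 < 1.
Proof.
  rewrite <- (ln_exp 1). apply ln_increasing; [lra |].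
  pose proof (exp_ineq1 1 ltac:(lra)). lra.
Qed.

Lemma exp_sub_ge (x y : R) : exp y * (x - y) <= exp x - exp y.
Proof.
  replace (exp x) with (exp y * exp (x - y)) by (rewrite <- exp_plus; f_equal; ring).
  pose proof (exp_pos y). pose proof (exp_ineq1_le (x - y)). nra.
Qed.

Lemma exp_ge_sqr_div4 (x : R) : 0 <= x -> x ^ 2 / 4 <= exp x.
Proof.
  intros Hx. replace (exp x) with (exp (x / 2) * exp (x / 2))
    by (rewrite <- exp_plus; f_equal; field).
  pose proof (exp_ineq1_le (x / 2)). nra.
Qed.

Lemma one_sub_exp_neg_ge_half (y : R) : 0 <= y <= 1 -> y / 2 <= 1 - exp (- y).
Proof.
  intros Hy. pose proof (exp_ineq1_le y). pose proof (exp_pos y).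
  rewrite exp_Ropp.
  assert (/ exp y <= / (1 + y)) by (apply Rinv_le_contravar; lra).
  assert (y / 2 <= 1 - / (1 + y)).
  { apply Rmult_le_reg_r with (2 * (1 + y)); [lra |].
    replace ((1 - / (1 + y)) * (2 * (1 + y))) with (2 * y) by (field; lra). nra. }
  lra.
Qed.

Lemma ln_sub_le (L c : R) : 0 < c < L -> ln (L - c) <= ln L - c / L.
Proof.
  intros Hc.
  replace (L - c) with (L * ((L - c) / L)) by (field; lra).
  assert (Hratio : 0 < (L - c) / L) by (apply Rdiv_lt_0_compat; lra).
  rewrite ln_mult by lra.
  pose proof (ln_le_sub_1 ((L - c) / L) Hratio) as Hln.
  replace ((L - c) / L - 1) with (- (c / L)) in Hln by (field; lra). lra.
Qed.

Lemma Rpower_sub_le (L c p : R) : 0 < c < L -> 0 <= p ->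
  Rpower (L - c) p <= Rpower L p * exp (- (p * c / L)).
Proof.
  intros Hc Hp. unfold Rpower. rewrite <- exp_plus. apply exp_le_exp.
  pose proof (ln_sub_le L c Hc).
  replace (p * c / L) with (p * (c / L)) by (field; lra). nra.
Qed.

Lemma Rpower_sub_ge (L c p : R) : 0 < c < L -> p <= 0 ->
  Rpower L p * exp (- (p * c / L)) <= Rpower (L - c) p.
Proof.
  intros Hc Hp. unfold Rpower. rewrite <- exp_plus. apply exp_le_exp.
  pose proof (ln_sub_le L c Hc).
  replace (p * c / L) with (p * (c / L)) by (field; lra). nra.
Qed.

Lemma Rpower_pow_inv_INR (x : R) (n : nat) : (0 < n)%nat -> 0 < x ->
  Rpower (x ^ n) (/ INR n) = x.
Proof.
  intros Hn Hx. assert (0 < INR n) by (apply lt_0_INR; lia).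
  rewrite <- Rpower_pow, Rpower_mult by lra.
  replace (INR n * / INR n) with 1 by (field; lra). apply Rpower_1; lra.
Qed.

Lemma ln_inv_double (r : R) : 0 < r -> ln (/ (2 * r)) = ln (/ r) - ln 2.
Proof. intros Hr. rewrite !ln_Rinv, ln_mult by lra. ring. Qed.

Lemma ln_inv_large_near_0 (M : R) : exists R0, 0 < R0 /\ R0 <= / 2 /\
  forall r, 0 < r -> r < R0 -> M < ln (/ r).
Proof.
  exists (Rmin (/ 2) (exp (- M))). split; [| split].
  - apply Rmin_pos; [lra | apply exp_pos].
  - apply Rmin_l.
  - intros r Hr HrR. rewrite ln_Rinv by lra.
    assert (Hr' : r < exp (- M)) by (eapply Rlt_le_trans; [exact HrR | apply Rmin_r]).
    apply ln_increasing in Hr'; [| exact Hr].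
    rewrite ln_exp in Hr'. lra.
Qed.

Lemma quadratic_dominates_affine (b k : R) : 0 < b ->
  exists U, 0 <= U /\ forall u, U <= u -> k + u <= b * u ^ 2.
Proof.
  intros Hb. pose proof (Rle_abs k). pose proof (Rabs_pos k).
  exists (1 + (1 + Rabs k) / b).
  assert (Hq : 0 <= (1 + Rabs k) / b) by (apply Rle_mult_inv_pos; lra).
  split; [lra |]. intros u Hu.
  assert (1 + Rabs k <= b * u).
  { replace (1 + Rabs k) with (b * ((1 + Rabs k) / b)) by (field; lra). nra. }
  nra.
Qed.

Lemma psi_zero_increment (n : nat) (mu L : R) : (0 < n)%nat -> 0 < mu -> 1 < L ->
  Rpower (L - ln 2) (- mu) - Rpower L (- mu) >=
  Rpower ((/ 2) ^ n * mu ^ n * Rpower L (- INR n * (1 + mu))) (/ INR n).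
Proof.
  intros Hn Hmu HL. pose proof ln_lt_2 as Hln2_half.
  pose proof ln_2_lt_1 as Hln2.
  set (P := Rpower L (- mu)).
  assert (HP : 0 < P) by apply exp_pos.
  assert (Hphi : (/ 2) ^ n * mu ^ n * Rpower L (- INR n * (1 + mu))
                 = (mu / 2 * (P / L)) ^ n).
  { replace (- INR n * (1 + mu)) with ((- mu + - (1)) * INR n) by ring.
    rewrite <- Rpower_mult, Rpower_pow, Rpower_plus, (Rpower_Ropp L 1), Rpower_1
      by (try apply exp_pos; lra).
    fold P. unfold Rdiv. rewrite !Rpow_mult_distr. ring. }
  assert (Hroot_pos : 0 < mu / 2 * (P / L)) by (apply Rmult_lt_0_compat; apply Rdiv_lt_0_compat; lra).
  rewrite Hphi, Rpower_pow_inv_INR by assumption.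
  pose proof (Rpower_sub_ge L (ln 2) (- mu) ltac:(lra) ltac:(lra)) as Hsub.
  fold P in Hsub.
  pose proof (exp_ineq1_le (- (- mu * ln 2 / L))) as Hexp.
  assert (Hgain : mu / 2 / L <= mu * ln 2 / L).
  { unfold Rdiv. apply Rmult_le_compat_r; [left; apply Rinv_0_lt_compat |]; nra. }
  replace (- (- mu * ln 2 / L)) with (mu * ln 2 / L) in * by (field; lra).
  replace (mu / 2 * (P / L)) with (P * (mu / 2 / L)) by (field; lra).
  nra.
Qed.

Lemma psi_pos_increment (n : nat) (a mu L : R) :
  (0 < n)%nat -> 0 < mu -> 0 < a <= 1 -> 1 <= L ->
  exp (- (mu * Rpower L a / INR n)) <= mu * (a * ln 2 / L) / 2 ->
  exp (- mu * Rpower (L - ln 2) a) - exp (- mu * Rpower L a) >=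
  Rpower (exp (- (INR n + 1) * mu * Rpower L a)) (/ INR n).
Proof.
  intros Hn Hmu Ha HL Hsmall. pose proof ln_lt_2 as Hln2_half.
  pose proof ln_2_lt_1 as Hln2.
  assert (Hnr : 0 < INR n) by (apply lt_0_INR; lia).
  set (t := Rpower L a). set (t' := Rpower (L - ln 2) a).
  set (y := a * ln 2 / L).
  assert (Hy : 0 <= y <= 1).
  { unfold y. split; [apply Rle_mult_inv_pos; nra |].
    apply Rmult_le_reg_r with L; [lra |]. field_simplify; nra. }
  assert (Ht1 : 1 <= t).
  { unfold t. rewrite <- (Rpower_O L) by lra. apply Rle_Rpower; lra. }
  assert (Hdrop : y / 2 <= t - t').
  { pose proof (Rpower_sub_le L (ln 2) a ltac:(lra) ltac:(lra)) as Hsub.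
    fold t t' y in Hsub.
    pose proof (one_sub_exp_neg_ge_half y Hy) as Hexp. nra. }
  assert (Hroot : Rpower (exp (- (INR n + 1) * mu * t)) (/ INR n)
                  = exp (- mu * t) * exp (- (mu * t / INR n))).
  { unfold Rpower. rewrite ln_exp, <- exp_plus. f_equal. field. lra. }
  rewrite Hroot.
  pose proof (exp_sub_ge (- mu * t') (- mu * t)) as Hconvex.
  pose proof (exp_pos (- mu * t)) as HE.
  fold y in Hsmall.
  assert (Hsmall' : exp (- (mu * t / INR n)) <= mu * (t - t')).
  { apply Rle_trans with (mu * (y / 2)).
    - replace (mu * (y / 2)) with (mu * y / 2) by field. exact Hsmall.
    - apply Rmult_le_compat_l; lra. }
  apply Rle_ge. apply Rle_trans with (exp (- mu * t) * (mu * (t - t'))).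
  - apply Rmult_le_compat_l; lra.
  - replace (mu * (t - t')) with (- mu * t' - - mu * t) by ring. exact Hconvex.
Qed.

Lemma psi_pos_threshold (n : nat) (a mu : R) : (0 < n)%nat -> 0 < mu -> 0 < a ->
  exists M, 1 <= M /\ forall L, M < L ->
    exp (- (mu * Rpower L a / INR n)) <= mu * (a * ln 2 / L) / 2.
Proof.
  intros Hn Hmu Ha. pose proof ln_lt_2 as Hln2_half.
  assert (Hnr : 0 < INR n) by (apply lt_0_INR; lia).
  set (K := 2 / (mu * a * ln 2)).
  assert (HK : 0 < K) by (apply Rdiv_lt_0_compat; [| apply Rmult_lt_0_compat]; nra).
  destruct (quadratic_dominates_affine (mu * a ^ 2 / (4 * INR n)) (ln K))
    as [U [HU0 HU]].
  { apply Rdiv_lt_0_compat; [apply Rmult_lt_0_compat; [| apply pow_lt] |]; lra. }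
  exists (exp U). split; [pose proof (exp_ineq1_le U); lra |].
  intros L HL. pose proof (exp_pos U) as HexpU.
  assert (Hu : U <= ln L).
  { left. rewrite <- (ln_exp U). apply ln_increasing; lra. }
  assert (Hgrowth : ln K + ln L <= mu * Rpower L a / INR n).
  { apply Rle_trans with (mu * ((a * ln L) ^ 2 / 4) / INR n).
    - replace (mu * ((a * ln L) ^ 2 / 4) / INR n)
        with (mu * a ^ 2 / (4 * INR n) * ln L ^ 2) by (field; lra).
      apply HU, Hu.
    - unfold Rdiv. apply Rmult_le_compat_r; [left; apply Rinv_0_lt_compat; lra |].
      apply Rmult_le_compat_l; [lra |]. apply exp_ge_sqr_div4. nra. }
  apply Rle_trans with (exp (- (ln K + ln L))); [apply exp_le_exp; lra |].
  rewrite <- ln_mult, exp_Ropp, exp_ln by nra.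
  right. unfold K. field. repeat split; nra.
Qed.

Theorem lemma5p2 (n : nat) (lam mu : R)
  (hn : (2 <= n)%nat) (hlam0 : 0 <= lam) (hlam1 : lam <= INR n - 1)
  (hmu : 0 < mu) :
  exists R0 : R, 0 < R0 /\ R0 <= / 2 /\
    forall r : R, 0 < r -> r < R0 ->
      psi5 (alpha5 n lam) mu (2 * r) - psi5 (alpha5 n lam) mu r
      >= Rpower (phi5 n (alpha5 n lam) mu r) (/ INR n).
Proof.
  assert (Hn : (0 < n)%nat) by lia.
  assert (Ha1 : alpha5 n lam <= 1).
  { assert (Hn2 : INR 2 <= INR n) by (apply le_INR; lia). simpl in Hn2.
    unfold alpha5. assert (Hfrac : 0 <= lam / (INR n - 1)) by (apply Rle_mult_inv_pos; lra).
    lra. }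
  unfold psi5, phi5, logpow.
  destruct (Rlt_dec 0 (alpha5 n lam)) as [Ha | Ha].
  - destruct (psi_pos_threshold n (alpha5 n lam) mu Hn hmu Ha) as [M [HM1 HM]].
    destruct (ln_inv_large_near_0 M) as [R0 [HR0 [HR0half Hlarge]]].
    exists R0. do 2 (split; [assumption |]). intros r Hr HrR.
    specialize (Hlarge r Hr HrR).
    rewrite ln_inv_double by assumption.
    apply psi_pos_increment; auto; lra.
  - destruct (ln_inv_large_near_0 1) as [R0 [HR0 [HR0half Hlarge]]].
    exists R0. do 2 (split; [assumption |]). intros r Hr HrR.
    rewrite ln_inv_double by assumption.
    apply psi_zero_increment; auto.
Qed.
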